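(* Let $\alpha\in(0,1/2)$ and $v\in\mathcal{C}^\alpha(\mathbb{R}^d)$. Assume that $I^{\mathrm{It\hat o}}_k(v,dv)$ converges uniformly to a limit $I^{\mathrm{It\hat o}}(v,dv)$ as $k\to\infty$. Then $[v,v]_k$ converges uniformly to a limit $[v,v]$. If moreover \[ C:=\sup_k\sup_{0\le m<m'\le2^k}\frac{\big|I^{\mathrm{It\hat o}}_k(v,dv)(m'2^{-k})-I^{\mathrm{It\hat o}}_k(v,dv)(m2^{-k})-v(m2^{-k})\big(v(m'2^{-k})-v(m2^{-k})\big)\big|}{|(m'-m)2^{-k}|^{2\alpha}}<\infty, \] then $[v,v]\in\mathcal{C}^{2\alpha}$ and $\|[v,v]\|_{2\alpha}\lesssim C+\|v\|_\alpha^2$.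
   Context: For $p\in\mathbb{N}$, $1\le m\le2^p$: $t^0_{pm}=(m-1)2^{-p}$, $t^2_{pm}=m2^{-p}$. For continuous $f:[0,1]\to E$ the Schauder coefficients are $f_{-10}=f(0)$, $f_{00}=f(1)-f(0)$, $f_{p0}=0$ ($p\ge1$), $f_{pm}=2f((2m-1)2^{-p-1})-f((m-1)2^{-p})-f(m2^{-p})$ ($p\ge0,m\ge1$); $\|f\|_\alpha:=\sup_{p,m}2^{p\alpha}|f_{pm}|$, $\mathcal{C}^\alpha:=\{f\text{ continuous}:\|f\|_\alpha<\infty\}$ (for $\alpha\in(0,1)$ equal to the $\alpha$-Hölder space with equivalent norm). For $v=(v^1,\dots,v^d)$, $I^{\mathrm{It\hat o}}_k(v,dv)$ is the $d\times d$ matrix $(I^{\mathrm{It\hat o}}_k(v^i,dv^j))_{i,j}$ with \[ I^{\mathrm{It\hat o}}_k(g,dh)(t):=\sum_{m=1}^{2^k}g(t^0_{km})\big(h(t^2_{km}\wedge t)-h(t^0_{km}\wedge t)\big), \] $[v,v]_k:=([v^i,v^j]_k)_{i,j}$ with $[g,h]_k(t):=\sum_{m=1}^{2^k}(g(t^2_{km}\wedge t)-g(t^0_{km}\wedge t))(h(t^2_{km}\wedge t)-h(t^0_{km}\wedge t))$, and $v(s)(v(t)-v(s))$ denotes the matrix $(v^i(s)(v^j(t)-v^j(s)))_{i,j}$. *)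

From Stdlib Require Import Reals.
Open Scope R_scope.

Fixpoint rsum (n : nat) (f : nat -> R) : R :=
  match n with O => 0 | S n' => rsum n' f + f n' end.

Definition dy (k j : nat) : R := INR j / 2 ^ k.

Definition cont01 (f : R -> R) : Prop :=
  forall t, 0 <= t <= 1 -> forall eps, 0 < eps -> exists delta, 0 < delta /\
    forall s, 0 <= s <= 1 -> Rabs (s - t) < delta -> Rabs (f s - f t) < eps.

Definition schauder_coef (f : R -> R) (p m : nat) : R :=
  2 * f (INR (2 * m - 1) / 2 ^ (S p)) - f (INR (m - 1) / 2 ^ p) - f (INR m / 2 ^ p).

(* holder_bound a f M  <->  ||f||_a <= M  (sup over all Schauder indices,
   including f_{-1,0} = f(0), f_{00} = f(1) - f(0), f_{p0} = 0 for p >= 1) *)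
Definition holder_bound (a : R) (f : R -> R) (M : R) : Prop :=
  Rpower 2 (- a) * Rabs (f 0) <= M /\
  Rabs (f 1 - f 0) <= M /\
  0 <= M /\
  forall p m : nat, (1 <= m)%nat -> (m <= 2 ^ p)%nat ->
    Rpower 2 (INR p * a) * Rabs (schauder_coef f p m) <= M.

Definition in_C (a : R) (f : R -> R) : Prop :=
  cont01 f /\ exists M, holder_bound a f M.

(* Vector valued functions v : nat -> R -> R, components v i for i < d,
   with the max norm on R^d; matrix valued Q : nat -> nat -> R -> R with
   the max-entry norm on d x d matrices. *)
Definition vec_in_C (d : nat) (a : R) (v : nat -> R -> R) : Prop :=
  forall i, (i < d)%nat -> in_C a (v i).
Definition vec_holder_bound (d : nat) (a : R) (v : nat -> R -> R) (M : R) : Prop :=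
  forall i, (i < d)%nat -> holder_bound a (v i) M.
Definition mat_in_C (d : nat) (a : R) (Q : nat -> nat -> R -> R) : Prop :=
  forall i j, (i < d)%nat -> (j < d)%nat -> in_C a (Q i j).
Definition mat_holder_bound (d : nat) (a : R) (Q : nat -> nat -> R -> R) (M : R) : Prop :=
  forall i j, (i < d)%nat -> (j < d)%nat -> holder_bound a (Q i j) M.

Definition ito_k (k : nat) (g h : R -> R) (t : R) : R :=
  rsum (2 ^ k) (fun j => g (dy k j) * (h (Rmin (dy k (S j)) t) - h (Rmin (dy k j) t))).

Definition qv_k (k : nat) (g h : R -> R) (t : R) : R :=
  rsum (2 ^ k) (fun j => (g (Rmin (dy k (S j)) t) - g (Rmin (dy k j) t))
                        * (h (Rmin (dy k (S j)) t) - h (Rmin (dy k j) t))).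

Definition mat_unif_conv (d : nat) (F : nat -> nat -> nat -> R -> R)
    (L : nat -> nat -> R -> R) : Prop :=
  forall eps, 0 < eps -> exists N, forall k, (N <= k)%nat ->
    forall i j, (i < d)%nat -> (j < d)%nat -> forall t, 0 <= t <= 1 ->
      Rabs (F k i j t - L i j t) < eps.

Definition ito_mat (v : nat -> R -> R) : nat -> nat -> nat -> R -> R :=
  fun k i j => ito_k k (v i) (v j).
Definition qv_mat (v : nat -> R -> R) : nat -> nat -> nat -> R -> R :=
  fun k i j => qv_k k (v i) (v j).

Definition ito_ratio_bound (d : nat) (a : R) (v : nat -> R -> R) (C : R) : Prop :=
  forall k m m' : nat, (m < m')%nat -> (m' <= 2 ^ k)%nat ->
    forall i j, (i < d)%nat -> (j < d)%nat ->
      Rabs (ito_k k (v i) (v j) (dy k m') - ito_k k (v i) (v j) (dy k m)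
            - v i (dy k m) * (v j (dy k m') - v j (dy k m)))
      <= C * Rpower (INR (m' - m) / 2 ^ k) (2 * a).

From Stdlib Require Import Reals Lra Lia.
Open Scope R_scope.

(* Summation by parts gives
     [g,h]_k = g h - g(0) h(0) - I_k(g,dh) - I_k(h,dg)    on [0,1],
   so [v,v]_k converges with I_k(v,dv).  On a dyadic interval [s,t] of level
   q <= k, the same identity writes the increment of [g,h]_k as
   (g t - g s)(h t - h s) minus two Ito remainders, each at most C 2^(-2 q a).
   The Schauder bound gives |g t - g s| <= 3 ||g||_a 2^(-q a), so every dyadic
   increment of [g,h]_k, hence of its uniform limit, is at most
   (9 ||v||_a^2 + 2 C) 2^(-2 q a); a Schauder coefficient of the limit is a
   sum of two such increments. *)

Lemma rsum_ext n f g : (forall j, (j < n)%nat -> f j = g j) -> rsum n f = rsum n g.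
Proof.
  induction n as [|n IHn]; intros Hfg; simpl; [reflexivity|].
  rewrite IHn by (intros; apply Hfg; lia). rewrite Hfg by lia. reflexivity.
Qed.

Lemma rsum_plus n f g : rsum n (fun j => f j + g j) = rsum n f + rsum n g.
Proof. induction n as [|n IHn]; simpl; [ring|rewrite IHn; ring]. Qed.

Lemma rsum_telescope n F : rsum n (fun j => F (S j) - F j) = F n - F O.
Proof. induction n as [|n IHn]; simpl; [ring|rewrite IHn; ring]. Qed.

Lemma rsum_eq0 n f : (forall j, (j < n)%nat -> f j = 0) -> rsum n f = 0.
Proof.
  induction n as [|n IHn]; intros Hf; simpl; [reflexivity|].
  rewrite IHn by (intros; apply Hf; lia). rewrite Hf by lia. ring.
Qed.

Lemma Rle_of_le_plus_eps x B : (forall eps, 0 < eps -> x <= B + eps) -> x <= B.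
Proof. intros H. destruct (Rle_dec x B); [assumption|]. specialize (H ((x - B) / 2)). lra. Qed.

Lemma pow2_pos k : 0 < 2 ^ k.
Proof. apply pow_lt; lra. Qed.

Lemma INR_pow2 k : INR (2 ^ k) = 2 ^ k.
Proof. rewrite pow_INR. reflexivity. Qed.

Lemma dy_ge0 k j : 0 <= dy k j.
Proof. unfold dy. apply Rmult_le_pos; [apply pos_INR|left; apply Rinv_0_lt_compat, pow2_pos]. Qed.

Lemma dy_le_S k j : dy k j <= dy k (S j).
Proof.
  unfold dy. apply Rmult_le_compat_r; [left; apply Rinv_0_lt_compat, pow2_pos|].
  apply le_INR; lia.
Qed.

Lemma dy_0 k : dy k 0 = 0.
Proof. unfold dy. simpl. field. apply pow_nonzero; lra. Qed.

Lemma dy_pow2 k : dy k (2 ^ k) = 1.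
Proof. unfold dy. rewrite INR_pow2. field. apply pow_nonzero; lra. Qed.

Lemma dy_range q n : (n <= 2 ^ q)%nat -> 0 <= dy q n <= 1.
Proof.
  intros Hn. split; [apply dy_ge0|]. rewrite <- (dy_pow2 q).
  unfold dy. apply Rmult_le_compat_r; [left; apply Rinv_0_lt_compat, pow2_pos|].
  apply le_INR, Hn.
Qed.

Lemma dy_mul_pow2 q r n : dy (q + r) (n * 2 ^ r) = dy q n.
Proof.
  unfold dy. rewrite mult_INR, INR_pow2, pow_add. field.
  split; apply pow_nonzero; lra.
Qed.

Lemma dy_double q n : dy (S q) (2 * n) = dy q n.
Proof. rewrite <- (dy_mul_pow2 q 1 n), Nat.add_1_r, Nat.mul_comm. reflexivity. Qed.

Lemma Rpower_pos x y : 0 < Rpower x y.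
Proof. apply exp_pos. Qed.

Lemma Rpower2_ge1 y : 0 <= y -> 1 <= Rpower 2 y.
Proof.
  intros [Hy|<-]; [|rewrite Rpower_O; lra].
  rewrite <- (Rpower_O 2) by lra. left. apply Rpower_lt; lra.
Qed.

(* [2^a <= sqrt 2 < 3/2]; this is what makes the constant 3 below self-reproducing. *)
Lemma Rpower2_le_3_2 a : a <= 1 / 2 -> Rpower 2 a <= 3 / 2.
Proof.
  intros Ha. assert (Hsq : Rpower 2 a * Rpower 2 a <= 2).
  { rewrite <- Rpower_plus. rewrite <- (Rpower_1 2) at 2 by lra.
    destruct (Req_dec (a + a) 1) as [->|Hne]; [lra|]. left; apply Rpower_lt; lra. }
  pose proof (Rpower_pos 2 a). nra.
Qed.

Lemma Rpower2_S q a : Rpower 2 (INR (S q) * a) = Rpower 2 a * Rpower 2 (INR q * a).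
Proof. rewrite <- Rpower_plus. f_equal. rewrite S_INR. ring. Qed.

Lemma Rpower_inv_pow2 q a : Rpower (/ 2 ^ q) a * Rpower 2 (INR q * a) = 1.
Proof.
  unfold Rpower. rewrite <- exp_plus, ln_Rinv, ln_pow by (lra || apply pow2_pos).
  replace (a * - (INR q * ln 2) + INR q * a * ln 2) with 0 by ring. apply exp_0.
Qed.

Lemma schauder_coef_dy f q u : schauder_coef f q (S u) =
  2 * f (dy (S q) (S (2 * u))) - f (dy q u) - f (dy q (S u)).
Proof.
  unfold schauder_coef. replace (2 * S u - 1)%nat with (S (2 * u)) by lia.
  replace (S u - 1)%nat with u by lia. reflexivity.
Qed.

Lemma holder_bound_nonneg a f M : holder_bound a f M -> 0 <= M.
Proof. intros [_ [_ [HM _]]]. exact HM. Qed.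

Lemma holder_bound_le a f M M' : holder_bound a f M -> M <= M' -> holder_bound a f M'.
Proof.
  intros [H0 [H1 [H2 Hcoef]]] HM. repeat split; try lra.
  intros p m Hm1 Hm2. specialize (Hcoef p m Hm1 Hm2). lra.
Qed.

Lemma Rabs_midpoint_increments x m y :
  Rabs (m - x) <= (Rabs (y - x) + Rabs (2 * m - x - y)) / 2 /\
  Rabs (y - m) <= (Rabs (y - x) + Rabs (2 * m - x - y)) / 2.
Proof. unfold Rabs; split; repeat destruct Rcase_abs; lra. Qed.

(* Induction on the level: a level-(q+1) increment is half the parent
   increment plus or minus half a level-q Schauder coefficient. *)
Lemma holder_bound_dyadic_increment a f M : a <= 1 / 2 -> holder_bound a f M ->
  forall q n, (S n <= 2 ^ q)%nat ->
  Rpower 2 (INR q * a) * Rabs (f (dy q (S n)) - f (dy q n)) <= 3 * M.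
Proof.
  intros Ha Hf. pose proof (holder_bound_nonneg _ _ _ Hf) as HM.
  destruct Hf as [_ [H01 [_ Hcoef]]].
  pose proof (Rpower2_le_3_2 _ Ha). pose proof (Rpower_pos 2 a).
  induction q as [|q IHq]; intros n Hn.
  - assert (n = 0)%nat by (simpl in Hn; lia); subst n.
    change (dy 0 1) with (dy 0 (2 ^ 0)).
    rewrite Rmult_0_l, Rpower_O, dy_0, dy_pow2 by lra. lra.
  - rewrite Rpower2_S. set (w := Rpower 2 (INR q * a)) in *.
    assert (Hw : 0 < w) by apply Rpower_pos.
    assert (Hhalf : forall X c Y, Rabs Y <= (Rabs X + Rabs c) / 2 ->
              w * Rabs X <= 3 * M -> w * Rabs c <= M -> Rpower 2 a * w * Rabs Y <= 3 * M).
    { intros X c Y HY HX Hc. assert (w * Rabs Y <= 2 * M).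
      { apply Rle_trans with (w * ((Rabs X + Rabs c) / 2)); [apply Rmult_le_compat_l|]; lra. }
      pose proof (Rabs_pos Y). nra. }
    destruct (Nat.Even_or_Odd n) as [[u ->]|[u ->]];
      assert (Hu : (S u <= 2 ^ q)%nat) by (simpl in Hn; lia);
      pose proof (Hcoef q (S u) ltac:(lia) Hu) as Hc; rewrite schauder_coef_dy in Hc;
      destruct (Rabs_midpoint_increments (f (dy q u)) (f (dy (S q) (S (2 * u))))
                  (f (dy q (S u)))) as [Hleft Hright].
    + rewrite dy_double. exact (Hhalf _ _ _ Hleft (IHq u Hu) Hc).
    + replace (S (2 * u + 1)) with (2 * S u)%nat by lia.
      replace (2 * u + 1)%nat with (S (2 * u)) by lia.
      rewrite dy_double. exact (Hhalf _ _ _ Hright (IHq u Hu) Hc).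
Qed.

Lemma holder_bound_of_dyadic_increments b f B : 0 <= b -> 0 <= B -> f 0 = 0 ->
  (forall q n, (S n <= 2 ^ q)%nat ->
     Rpower 2 (INR q * b) * Rabs (f (dy q (S n)) - f (dy q n)) <= B) ->
  holder_bound b f (2 * B).
Proof.
  intros Hb HB Hf0 Hinc. split; [|split; [|split]].
  - rewrite Hf0, Rabs_R0, Rmult_0_r. lra.
  - specialize (Hinc 0%nat 0%nat ltac:(simpl; lia)).
    change (dy 0 1) with (dy 0 (2 ^ 0)) in Hinc.
    rewrite Rmult_0_l, Rpower_O, dy_0, dy_pow2 in Hinc by lra. lra.
  - lra.
  - intros p [|u] Hm1 Hm2; [lia|]. rewrite schauder_coef_dy.
    pose proof (Hinc (S p) (2 * u)%nat ltac:(simpl; lia)) as Hl.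
    pose proof (Hinc (S p) (S (2 * u)) ltac:(simpl; lia)) as Hr.
    replace (S (S (2 * u))) with (2 * S u)%nat in Hr by lia.
    rewrite !dy_double, Rpower2_S in Hl, Hr.
    pose proof (Rpower2_ge1 _ Hb).
    set (w := Rpower 2 (INR p * b)) in *. assert (0 < w) by apply Rpower_pos.
    set (m := f (dy (S p) (S (2 * u)))) in *.
    assert (Htri : Rabs (2 * m - f (dy p u) - f (dy p (S u)))
                   <= Rabs (m - f (dy p u)) + Rabs (f (dy p (S u)) - m))
      by (unfold Rabs; repeat destruct Rcase_abs; lra).
    pose proof (Rabs_pos (m - f (dy p u))). pose proof (Rabs_pos (f (dy p (S u)) - m)).
    apply Rle_trans with (w * (Rabs (m - f (dy p u)) + Rabs (f (dy p (S u)) - m)));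
      [apply Rmult_le_compat_l; lra|nra].
Qed.

Lemma qv_k_summation_by_parts k g h t : 0 <= t <= 1 ->
  qv_k k g h t = g t * h t - g 0 * h 0 - ito_k k g h t - ito_k k h g t.
Proof.
  intros Ht. unfold qv_k, ito_k.
  set (y := fun j => Rmin (dy k j) t).
  assert (Hstep : forall j,
    (g (y (S j)) - g (y j)) * (h (y (S j)) - h (y j))
    + g (dy k j) * (h (y (S j)) - h (y j)) + h (dy k j) * (g (y (S j)) - g (y j))
    = g (y (S j)) * h (y (S j)) - g (y j) * h (y j)).
  { intros j. unfold y. pose proof (dy_le_S k j).
    destruct (Rle_dec (dy k j) t) as [Hle|Hgt].
    - rewrite (Rmin_left (dy k j) t Hle). ring.
    - rewrite (Rmin_right (dy k j) t), (Rmin_right (dy k (S j)) t) by lra. ring. }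
  pose proof (rsum_telescope (2 ^ k) (fun j => g (y j) * h (y j))) as Htele.
  rewrite <- (rsum_ext _ _ _ (fun j _ => Hstep j)), !rsum_plus in Htele.
  unfold y in Htele. rewrite dy_pow2, dy_0, (Rmin_left 0 t), (Rmin_right 1 t) in Htele by lra.
  lra.
Qed.

Lemma qv_k_at_0 k g h : qv_k k g h 0 = 0.
Proof.
  apply rsum_eq0. intros j _. rewrite !Rmin_right by apply dy_ge0. ring.
Qed.

(* On [0,1] this is [Rmin c], and it is 1-Lipschitz with values in [0,1]
   on all of R, so composing a function continuous on [0,1] with it gives a
   function continuous everywhere. *)
Definition clamp_min (c s : R) : R := Rmax 0 (Rmin 1 (Rmin c s)).

Lemma clamp_min_range c s : 0 <= clamp_min c s <= 1.
Proof. unfold clamp_min, Rmin, Rmax; repeat destruct Rle_dec; lra. Qed.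

Lemma clamp_min_lipschitz c s s' : Rabs (clamp_min c s - clamp_min c s') <= Rabs (s - s').
Proof.
  unfold clamp_min, Rmin, Rmax; repeat destruct Rle_dec; unfold Rabs;
    repeat destruct Rcase_abs; lra.
Qed.

Lemma clamp_min_eq c t : 0 <= c -> 0 <= t <= 1 -> clamp_min c t = Rmin c t.
Proof. intros; unfold clamp_min, Rmin, Rmax; repeat destruct Rle_dec; lra. Qed.

Lemma continuity_pt_cont01_clamp_min g c t : cont01 g ->
  continuity_pt (fun s => g (clamp_min c s)) t.
Proof.
  intros Hg eps Heps. destruct (Hg _ (clamp_min_range c t) eps Heps) as [delta [Hdelta Hcont]].
  exists delta. split; [exact Hdelta|]. intros s [_ Hs]. simpl in *. unfold R_dist in *.
  apply Hcont; [apply clamp_min_range|].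
  eapply Rle_lt_trans; [apply clamp_min_lipschitz|exact Hs].
Qed.

Lemma continuity_pt_rsum n (F : nat -> R -> R) t : (forall j, continuity_pt (F j) t) ->
  continuity_pt (fun s => rsum n (fun j => F j s)) t.
Proof.
  intros HF. induction n as [|n IHn]; simpl.
  - apply continuity_pt_const. intros x y. reflexivity.
  - exact (continuity_pt_plus _ _ t IHn (HF n)).
Qed.

Lemma cont01_of_continuity_pt F f : (forall t, 0 <= t <= 1 -> continuity_pt F t) ->
  (forall t, 0 <= t <= 1 -> F t = f t) -> cont01 f.
Proof.
  intros HF HFf t Ht eps Heps. destruct (HF t Ht eps Heps) as [delta [Hdelta Hcont]].
  exists delta. split; [exact Hdelta|]. intros s Hs Hst.
  rewrite <- (HFf s Hs), <- (HFf t Ht).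
  destruct (Req_dec s t) as [->|Hne]; [rewrite Rminus_diag, Rabs_R0; exact Heps|].
  apply (Hcont s). split; [split; [exact I|congruence]|exact Hst].
Qed.

Lemma cont01_qv_k k g h : cont01 g -> cont01 h -> cont01 (qv_k k g h).
Proof.
  intros Hg Hh.
  apply (cont01_of_continuity_pt
    (fun s => rsum (2 ^ k) (fun j =>
       (g (clamp_min (dy k (S j)) s) - g (clamp_min (dy k j) s))
       * (h (clamp_min (dy k (S j)) s) - h (clamp_min (dy k j) s))))).
  - intros t _. apply (continuity_pt_rsum _ (fun j s =>
       (g (clamp_min (dy k (S j)) s) - g (clamp_min (dy k j) s))
       * (h (clamp_min (dy k (S j)) s) - h (clamp_min (dy k j) s)))).
    intros j. apply continuity_pt_mult; apply continuity_pt_minus;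
      apply continuity_pt_cont01_clamp_min; assumption.
  - intros t Ht. apply rsum_ext. intros j _.
    rewrite !clamp_min_eq by (apply dy_ge0 || exact Ht). reflexivity.
Qed.

Definition unif_conv01 (F : nat -> R -> R) (L : R -> R) : Prop :=
  forall eps, 0 < eps -> exists N, forall k, (N <= k)%nat ->
    forall t, 0 <= t <= 1 -> Rabs (F k t - L t) < eps.

Lemma mat_unif_conv_entry d F L i j : mat_unif_conv d F L -> (i < d)%nat -> (j < d)%nat ->
  unif_conv01 (fun k => F k i j) (L i j).
Proof.
  intros HFL Hi Hj eps Heps. destruct (HFL eps Heps) as [N HN].
  exists N. intros k Hk t Ht. exact (HN k Hk i j Hi Hj t Ht).
Qed.

Lemma unif_conv01_cont F L : (forall k, cont01 (F k)) -> unif_conv01 F L -> cont01 L.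
Proof.
  intros HF HFL t Ht eps Heps.
  destruct (HFL (eps / 3)) as [N HN]; [lra|].
  destruct (HF N t Ht (eps / 3)) as [delta [Hdelta Hcont]]; [lra|].
  exists delta. split; [exact Hdelta|]. intros s Hs Hst.
  specialize (Hcont s Hs Hst). pose proof (HN N (le_n N) s Hs). pose proof (HN N (le_n N) t Ht).
  revert Hcont H H0. unfold Rabs; repeat destruct Rcase_abs; lra.
Qed.

Lemma unif_conv01_eq_at F L t c : unif_conv01 F L -> 0 <= t <= 1 ->
  (forall k, F k t = c) -> L t = c.
Proof.
  intros HFL Ht HF. assert (Habs : Rabs (L t - c) <= 0).
  { apply Rle_of_le_plus_eps. intros eps Heps. destruct (HFL eps Heps) as [N HN].
    specialize (HN N (le_n N) t Ht). rewrite HF, <- Rabs_Ropp, Ropp_minus_distr in HN. lra. }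
  revert Habs. unfold Rabs. destruct Rcase_abs; lra.
Qed.

Lemma unif_conv01_scaled_increment F L W B N s t : unif_conv01 F L -> 0 < W ->
  0 <= s <= 1 -> 0 <= t <= 1 ->
  (forall k, (N <= k)%nat -> W * Rabs (F k t - F k s) <= B) ->
  W * Rabs (L t - L s) <= B.
Proof.
  intros HFL HW Hs Ht HF. apply Rle_of_le_plus_eps. intros eps Heps.
  set (e := eps / (2 * W)). assert (He : 0 < e) by (apply Rdiv_lt_0_compat; lra).
  assert (HWe : W * (2 * e) = eps) by (unfold e; field; lra).
  destruct (HFL e He) as [N' HN'].
  set (k := (N + N')%nat). specialize (HF k ltac:(unfold k; lia)).
  pose proof (HN' k ltac:(unfold k; lia) t Ht) as Hlt. pose proof (HN' k ltac:(unfold k; lia) s Hs) as Hls.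
  assert (Hclose : Rabs (L t - L s) <= Rabs (F k t - F k s) + 2 * e)
    by (revert Hlt Hls; unfold Rabs; repeat destruct Rcase_abs; lra).
  apply Rle_trans with (W * (Rabs (F k t - F k s) + 2 * e)); [apply Rmult_le_compat_l; lra|].
  lra.
Qed.

Lemma qv_mat_unif_conv d v Ito : mat_unif_conv d (ito_mat v) Ito ->
  mat_unif_conv d (qv_mat v)
    (fun i j t => v i t * v j t - v i 0 * v j 0 - Ito i j t - Ito j i t).
Proof.
  intros HIto eps Heps. destruct (HIto (eps / 2)) as [N HN]; [lra|]. exists N.
  intros k Hk i j Hi Hj t Ht. unfold qv_mat. rewrite qv_k_summation_by_parts by exact Ht.
  pose proof (HN k Hk i j Hi Hj t Ht) as Hij. pose proof (HN k Hk j i Hj Hi t Ht) as Hji.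
  unfold ito_mat in *. revert Hij Hji. unfold Rabs; repeat destruct Rcase_abs; lra.
Qed.

Definition ito_increment_bound (a : R) (g h : R -> R) (C : R) : Prop :=
  forall k m m' : nat, (m < m')%nat -> (m' <= 2 ^ k)%nat ->
    Rabs (ito_k k g h (dy k m') - ito_k k g h (dy k m) - g (dy k m) * (h (dy k m') - h (dy k m)))
    <= C * Rpower (INR (m' - m) / 2 ^ k) (2 * a).

Lemma ito_increment_bound_nonneg a g h C : ito_increment_bound a g h C -> 0 <= C.
Proof.
  intros HC. specialize (HC 0%nat 0%nat 1%nat ltac:(lia) ltac:(simpl; lia)).
  replace (INR (1 - 0) / 2 ^ 0) with 1 in HC by (simpl; field).
  unfold Rpower in HC. rewrite ln_1, Rmult_0_r, exp_0, Rmult_1_r in HC.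
  eapply Rle_trans; [apply Rabs_pos|exact HC].
Qed.

Lemma ito_increment_bound_coarse a g h C q k n : ito_increment_bound a g h C ->
  (q <= k)%nat -> (S n <= 2 ^ q)%nat ->
  Rabs (ito_k k g h (dy q (S n)) - ito_k k g h (dy q n) - g (dy q n) * (h (dy q (S n)) - h (dy q n)))
  <= C * Rpower (/ 2 ^ q) (2 * a).
Proof.
  intros HC Hqk Hn. destruct (Nat.le_exists_sub q k Hqk) as [r [-> _]].
  rewrite Nat.add_comm. pose proof (Nat.pow_nonzero 2 r ltac:(lia)).
  specialize (HC (q + r)%nat (n * 2 ^ r)%nat (S n * 2 ^ r)%nat ltac:(simpl; lia)
    ltac:(rewrite Nat.pow_add_r; apply Nat.mul_le_mono_r; exact Hn)).
  replace (S n * 2 ^ r - n * 2 ^ r)%nat with (2 ^ r)%nat in HC by (simpl; lia).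
  replace (INR (2 ^ r) / 2 ^ (q + r)) with (/ 2 ^ q) in HC
    by (rewrite INR_pow2, pow_add; field; split; apply pow_nonzero; lra).
  rewrite !dy_mul_pow2 in HC. exact HC.
Qed.

Section QuadraticVariation.

Variables (a C M : R) (g h : R -> R).
Hypothesis (Ha : a <= 1 / 2) (HCgh : ito_increment_bound a g h C)
  (HChg : ito_increment_bound a h g C) (HMg : holder_bound a g M) (HMh : holder_bound a h M).

Lemma qv_k_dyadic_increment q k n : (q <= k)%nat -> (S n <= 2 ^ q)%nat ->
  Rpower 2 (INR q * (2 * a)) * Rabs (qv_k k g h (dy q (S n)) - qv_k k g h (dy q n))
  <= 9 * M ^ 2 + 2 * C.
Proof.
  intros Hqk Hn.
  pose proof (holder_bound_dyadic_increment _ _ _ Ha HMg q n Hn) as Hg.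
  pose proof (holder_bound_dyadic_increment _ _ _ Ha HMh q n Hn) as Hh.
  pose proof (ito_increment_bound_coarse _ _ _ _ _ _ _ HCgh Hqk Hn) as E1.
  pose proof (ito_increment_bound_coarse _ _ _ _ _ _ _ HChg Hqk Hn) as E2.
  rewrite !(qv_k_summation_by_parts k g h) by (apply dy_range; lia).
  set (s := dy q n) in *. set (t := dy q (S n)) in *.
  set (rho := Rpower (/ 2 ^ q) (2 * a)) in *.
  set (w := Rpower 2 (INR q * a)) in *.
  assert (Hw : Rpower 2 (INR q * (2 * a)) = w * w)
    by (unfold w; rewrite <- Rpower_plus; f_equal; ring).
  assert (Hwrho : w * w * rho = 1)
    by (rewrite <- Hw, Rmult_comm; apply Rpower_inv_pow2).
  rewrite Hw.
  set (X := g t - g s) in *. set (Y := h t - h s) in *.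
  set (R1 := ito_k k g h t - ito_k k g h s - g s * Y) in *.
  set (R2 := ito_k k h g t - ito_k k h g s - h s * X) in *.
  replace (g t * h t - g 0 * h 0 - ito_k k g h t - ito_k k h g t
           - (g s * h s - g 0 * h 0 - ito_k k g h s - ito_k k h g s))
    with (X * Y - R1 - R2) by (unfold R1, R2, X, Y; ring).
  assert (Htri : Rabs (X * Y - R1 - R2) <= Rabs X * Rabs Y + 2 * C * rho).
  { rewrite <- Rabs_mult. revert E1 E2. unfold Rabs; repeat destruct Rcase_abs; lra. }
  assert (0 < w) by apply Rpower_pos.
  pose proof (holder_bound_nonneg _ _ _ HMg). pose proof (Rabs_pos X). pose proof (Rabs_pos Y).
  assert (HXY : (w * Rabs X) * (w * Rabs Y) <= (3 * M) * (3 * M))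
    by (apply Rmult_le_compat; nra).
  apply Rle_trans with (w * w * (Rabs X * Rabs Y + 2 * C * rho)); [apply Rmult_le_compat_l; nra|].
  replace (w * w * (Rabs X * Rabs Y + 2 * C * rho))
    with ((w * Rabs X) * (w * Rabs Y) + 2 * C * (w * w * rho)) by ring.
  rewrite Hwrho. simpl. lra.
Qed.

Lemma qv_limit_holder_bound Q : 0 <= a -> unif_conv01 (fun k => qv_k k g h) Q ->
  holder_bound (2 * a) Q (2 * (9 * M ^ 2 + 2 * C)).
Proof.
  intros Ha0 HQ. apply holder_bound_of_dyadic_increments.
  - lra.
  - pose proof (ito_increment_bound_nonneg _ _ _ _ HCgh). pose proof (pow2_ge_0 M). lra.
  - apply (unif_conv01_eq_at _ _ 0 0 HQ ltac:(lra)). intros k. apply qv_k_at_0.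
  - intros q n Hn. apply (unif_conv01_scaled_increment _ _ _ _ q _ _ HQ);
      [apply Rpower_pos|apply dy_range; lia|apply dy_range; lia|].
    intros k Hk. apply qv_k_dyadic_increment; assumption.
Qed.

End QuadraticVariation.

Theorem mainTheorem16 :
  forall (alpha : R) (d : nat), 0 < alpha < 1 / 2 ->
  exists K : R, 0 < K /\
  forall v : nat -> R -> R,
    vec_in_C d alpha v ->
    (exists Ito : nat -> nat -> R -> R, mat_unif_conv d (ito_mat v) Ito) ->
    (exists QV : nat -> nat -> R -> R, mat_unif_conv d (qv_mat v) QV) /\
    (forall QV : nat -> nat -> R -> R, mat_unif_conv d (qv_mat v) QV ->
       forall C : R, ito_ratio_bound d alpha v C ->
         mat_in_C d (2 * alpha) QV /\
         forall Mv : R, vec_holder_bound d alpha v Mv ->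
           mat_holder_bound d (2 * alpha) QV (K * (C + Mv ^ 2))).
Proof.
  intros alpha d Ha. exists 18. split; [lra|].
  intros v Hv [Ito HIto]. split; [eexists; exact (qv_mat_unif_conv _ _ _ HIto)|].
  intros QV HQV C HC.
  assert (Hentry : forall i j M, (i < d)%nat -> (j < d)%nat ->
            holder_bound alpha (v i) M -> holder_bound alpha (v j) M ->
            holder_bound (2 * alpha) (QV i j) (18 * (C + M ^ 2))).
  { intros i j M Hi Hj HMi HMj.
    assert (HCij : ito_increment_bound alpha (v i) (v j) C)
      by (intros k m m' Hm Hm'; exact (HC k m m' Hm Hm' i j Hi Hj)).
    assert (HCji : ito_increment_bound alpha (v j) (v i) C)
      by (intros k m m' Hm Hm'; exact (HC k m m' Hm Hm' j i Hj Hi)).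
    apply holder_bound_le with (2 * (9 * M ^ 2 + 2 * C)).
    - apply qv_limit_holder_bound with (v i) (v j); try assumption; [lra|lra|].
      exact (mat_unif_conv_entry _ _ _ _ _ HQV Hi Hj).
    - pose proof (ito_increment_bound_nonneg _ _ _ _ HCij). pose proof (pow2_ge_0 M). lra. }
  split.
  - intros i j Hi Hj. destruct (Hv i Hi) as [Hci [Mi HMi]], (Hv j Hj) as [Hcj [Mj HMj]]. split.
    + apply (unif_conv01_cont (fun k => qv_k k (v i) (v j))).
      * intros k. apply cont01_qv_k; assumption.
      * exact (mat_unif_conv_entry _ _ _ _ _ HQV Hi Hj).
    + exists (18 * (C + Rmax Mi Mj ^ 2)). apply Hentry; try assumption.
      * apply holder_bound_le with Mi; [exact HMi|apply Rmax_l].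
      * apply holder_bound_le with Mj; [exact HMj|apply Rmax_r].
  - intros Mv HMv i j Hi Hj. apply Hentry; auto.
Qed.
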